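(* Let $d=2$, $\mathcal{H}$ a separable Hilbert space, $\Lambda=\mathrm{Span}_\mathbb{Z}\{e_1,e_2\}\subset\mathbb{R}^2$, and $\{P(k)\}$ a family of orthogonal projectors of finite rank $m$ satisfying (P2)–(P4) below. Let $r\in\mathbb{Z}$. Then there exists a piecewise-smooth map $X:\partial\mathbb{B}_{\rm red}\to\mathcal{U}(\mathbb{C}^m)$ such that: (i) the winding number (degree) of $\det X:\partial\mathbb{B}_{\rm red}\to U(1)$, with $\partial\mathbb{B}_{\rm red}$ traversed $v_1\to v_2\to\cdots\to v_6\to v_1$, equals $-r$; (ii) whenever $\Phi:\partial\mathbb{B}_{\rm red}\to\mathcal{H}^m$, with $\Phi(k)$ an orthonormal basis of $\operatorname{Ran}P(k)$ for each $k$, satisfies the edge symmetries below, the frame $k\mapsto\Phi(k)\triangleleft X(k)$ also satisfies them; (iii) $X(k)\ne\mathrm{Id}$ only for $k\in E_3\cup E_4$.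
   Context: (P2) $\tau:\Lambda\to\mathcal{U}(\mathcal{H})$ is a unitary representation with $P(k+\lambda)=\tau_\lambda P(k)\tau_\lambda^{-1}$; (P3) $\Theta$ is antiunitary with $P(-k)=\Theta P(k)\Theta^{-1}$, $\Theta^2=\mathrm{Id}$; (P4) $\Theta\tau_\lambda=\tau_\lambda^{-1}\Theta$. In coordinates $(k_1,k_2)\leftrightarrow k_1e_1+k_2e_2$, $\mathbb{B}_{\rm red}=[0,\tfrac12]\times[-\tfrac12,\tfrac12]$, with vertices $v_1=(0,0)$, $v_2=(0,-\tfrac12)$, $v_3=(\tfrac12,-\tfrac12)$, $v_4=(\tfrac12,0)$, $v_5=(\tfrac12,\tfrac12)$, $v_6=(0,\tfrac12)$, and $E_i$ the segment from $v_i$ to $v_{i+1}$ ($v_7=v_1$). Edge symmetries: $\Phi(-k)=\Theta\Phi(k)$ for $k\in E_1\cup E_6$; $\Phi(k+e_2)=\tau_{e_2}\Phi(k)$ for $k\in E_2$; $\Phi(e_1-k)=\tau_{e_1}\Theta\Phi(k)$ for $k\in E_3\cup E_4$; $\Phi(k-e_2)=\tau_{e_2}^{-1}\Phi(k)$ for $k\in E_5$. Operators act on frames componentwise; $(\Phi\triangleleft U)_b=\sum_a\phi_aU_{ab}$. *)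

From mathcomp Require Import all_boot all_order all_algebra.
From mathcomp Require Import complex.
From mathcomp Require Import all_classical all_reals all_analysis.

Set Implicit Arguments.
Unset Strict Implicit.
Unset Printing Implicit Defensive.

Import Order.TTheory GRing.Theory Num.Theory.
Import numFieldNormedType.Exports.
Local Open Scope ring_scope.
Local Open Scope complex_scope.

Section Defs.
Variable R : realType.
Local Notation C := R[i].

(** * Geometry of the reduced Brillouin zone (d = 2), in coordinates
      (k1,k2) <-> k1 e1 + k2 e2. *)
Definition pt := (R * R)%type.
Definition padd (k l : pt) : pt := (k.1 + l.1, k.2 + l.2).
Definition popp (k : pt) : pt := (- k.1, - k.2).

Definition latt := (int * int)%type.
Definition lat_e1 : latt := (1%Z, 0%Z).
Definition lat_e2 : latt := (0%Z, 1%Z).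
Definition lat_opp (l : latt) : latt := (- l.1, - l.2)%R.
Definition lat_add (l l' : latt) : latt := (l.1 + l'.1, l.2 + l'.2)%R.
Definition lat_pt (l : latt) : pt := (l.1%:~R, l.2%:~R).

Definition lerp (p q : pt) (s : R) : pt :=
  (p.1 + s * (q.1 - p.1), p.2 + s * (q.2 - p.2)).
Definition on_seg (p q k : pt) : Prop :=
  exists2 s, 0 <= s <= 1 & k = lerp p q s.

(** vertices v1..v6 of B_red = [0,1/2] x [-1/2,1/2]; v7 = v1 *)
Definition vert (i : nat) : pt :=
  match i with
  | 2 => (0, - 2^-1)
  | 3 => (2^-1, - 2^-1)
  | 4 => (2^-1, 0)
  | 5 => (2^-1, 2^-1)
  | 6 => (0, 2^-1)
  | _ => (0, 0)
  end.

Definition edge (i : nat) (k : pt) : Prop := on_seg (vert i) (vert i.+1) k.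

Definition bdry (k : pt) : Prop := exists2 i, (1 <= i <= 6)%N & edge i k.

Definition loop (t : R) : pt :=
  if t <= 1 then lerp (vert 1) (vert 2) t
  else if t <= 2 then lerp (vert 2) (vert 3) (t - 1)
  else if t <= 3 then lerp (vert 3) (vert 4) (t - 2)
  else if t <= 4 then lerp (vert 4) (vert 5) (t - 3)
  else if t <= 5 then lerp (vert 5) (vert 6) (t - 4)
  else lerp (vert 6) (vert 1) (t - 5).

(** * Complex (pre-)Hilbert spaces: inner product antilinear in the first
      argument, linear in the second. *)
Section Hilbert.
Variable H : lmodType C.
Variable ip : H -> H -> C.

Definition inner_product : Prop :=
  [/\ (forall x y z (a : C), ip z (a *: x + y) = a * ip z x + ip z y),
      (forall x y, ip y x = (ip x y)^*),
      (forall x, 0 <= ip x x) &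
      (forall x, ip x x = 0 -> x = 0)].

Definition hnorm (x : H) : R := Num.sqrt (complex.Re (ip x x)).

Definition complete_ip : Prop :=
  forall u : nat -> H,
    (forall eps : R, 0 < eps -> exists N, forall n p, (N <= n)%N -> (N <= p)%N ->
        hnorm (u n - u p) < eps) ->
    exists l : H, forall eps : R, 0 < eps -> exists N, forall n, (N <= n)%N ->
        hnorm (u n - l) < eps.

Definition separable_ip : Prop :=
  exists s : nat -> H, forall (v : H) (eps : R), 0 < eps ->
    exists n, hnorm (v - s n) < eps.

Definition linear_op (T : H -> H) : Prop :=
  forall (a : C) x y, T (a *: x + y) = a *: T x + T y.
Definition antilinear_op (T : H -> H) : Prop :=
  forall (a : C) x y, T (a *: x + y) = a^* *: T x + T y.

Definition in_range (T : H -> H) (v : H) : Prop := exists w, v = T w.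

Definition orth_proj (T : H -> H) : Prop :=
  [/\ linear_op T, (forall x, T (T x) = T x) & (forall x y, ip (T x) y = ip x (T y))].

Definition rank_eq (T : H -> H) (m : nat) : Prop :=
  exists b : 'I_m -> H,
    [/\ (forall i, in_range T (b i)),
        (forall c : 'I_m -> C, \sum_i c i *: b i = 0 -> forall i, c i = 0) &
        (forall v, in_range T v -> exists c : 'I_m -> C, v = \sum_i c i *: b i)].

Definition unitary_op (U : H -> H) : Prop :=
  [/\ linear_op U, (forall x y, ip (U x) (U y) = ip x y) & (forall y, exists x, U x = y)].
Definition antiunitary_op (U : H -> H) : Prop :=
  [/\ antilinear_op U, (forall x y, ip (U x) (U y) = (ip x y)^*) &
      (forall y, exists x, U x = y)].

Definition unitary_rep (tau : latt -> H -> H) : Prop :=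
  [/\ (forall l, unitary_op (tau l)),
      (forall x, tau (0%Z, 0%Z) x = x) &
      (forall l l' x, tau (lat_add l l') x = tau l (tau l' x))].

Variable m : nat.
Definition frame := 'I_m -> H.

Definition frame_rmul (Phi : frame) (U : 'M[C]_m) : frame :=
  fun b => \sum_a U a b *: Phi a.

Definition onb_range (T : H -> H) (Phi : frame) : Prop :=
  [/\ (forall a, in_range T (Phi a)),
      (forall a b, ip (Phi a) (Phi b) = (a == b)%:R) &
      (forall v, in_range T v -> exists c : 'I_m -> C, v = \sum_a c a *: Phi a)].

(** edge symmetries of a frame Phi defined on the boundary of B_red
    (operators act componentwise; tau_{e2}^{-1} = tau_{-e2}) *)
Definition edge_sym (Theta : H -> H) (tau : latt -> H -> H) (Phi : pt -> frame) : Prop :=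
  [/\ (forall k, edge 1 k \/ edge 6 k -> forall a, Phi (popp k) a = Theta (Phi k a)),
      (forall k, edge 2 k -> forall a, Phi (padd k (lat_pt lat_e2)) a = tau lat_e2 (Phi k a)),
      (forall k, edge 3 k \/ edge 4 k ->
          forall a, Phi (padd (lat_pt lat_e1) (popp k)) a = tau lat_e1 (Theta (Phi k a))) &
      (forall k, edge 5 k ->
          forall a, Phi (padd k (popp (lat_pt lat_e2))) a = tau (lat_opp lat_e2) (Phi k a))].

End Hilbert.

Definition unitary_mx (m : nat) (U : 'M[C]_m) : Prop :=
  U *m (map_mx (fun z : C => z^*) U)^T = 1%:M.

Definition smoothR (g : R -> R) : Prop :=
  forall (n : nat) (x : R), derivable (derive1n n g) x 1.

Definition pw_smooth (m : nat) (X : pt -> 'M[C]_m) : Prop :=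
  forall i, (1 <= i <= 6)%N -> forall a b, exists gr gi : R -> R,
    [/\ smoothR gr, smoothR gi &
        forall s, 0 <= s <= 1 -> X (lerp (vert i) (vert i.+1) s) a b = gr s +i* gi s].

Definition expi2pi (th : R) : C := cos (2 * pi * th) +i* sin (2 * pi * th).

Definition winding (f : R -> C) (a b : R) (n : int) : Prop :=
  exists th : R -> R,
    [/\ {within `[a, b]%classic, continuous th}%classic,
        (forall t, a <= t <= b -> f t = expi2pi (th t)) &
        th b - th a = n%:~R].

End Defs.

From mathcomp Require Import all_boot all_order all_algebra.
From mathcomp Require Import complex.
From mathcomp Require Import all_classical all_reals all_analysis.
From mathcomp Require Import ring lra.

Set Implicit Arguments.
Unset Strict Implicit.
Unset Printing Implicit Defensive.

Import Order.TTheory GRing.Theory Num.Theory.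
Import numFieldNormedType.Exports.
Local Open Scope ring_scope.
Local Open Scope complex_scope.

(* The gauge X is the identity except on the right edge k1 = 1/2, i.e. on E3 u E4, where
   X(1/2, k2) = diag(exp(-2 pi i r (k2 + 1/2)), 1, ..., 1).  Along E3 u E4 the phase runs
   from 0 to -r, so det X winds -r times; at the corners v3 and v5 the phase is an integer,
   so X = Id there and X is continuous across E2 and E5.  The symmetry k |-> e1 - k of
   E3 u E4 sends k2 to -k2, which negates the phase modulo an integer: X(e1 - k) is the
   entrywise conjugate of X(k), which is exactly what the antilinear symmetry tau_e1 Theta
   needs for Phi <| X to keep it.  The other edge symmetries only relate points where
   X = Id. *)

Section Expi2pi.
Variable R : realType.

Lemma expi2pi0 : expi2pi (0 : R) = 1.
Proof. by rewrite /expi2pi mulr0 cos0 sin0. Qed.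

Lemma expi2piDn (x : R) (n : nat) : expi2pi (x + n%:R) = expi2pi x.
Proof.
rewrite /expi2pi mulrDr.
have -> : 2 * pi * n%:R = pi *+ 2 *+ n :> R by rewrite mulr_natr mulr_natl.
by rewrite (periodicn (@cosD2pi R)) (periodicn (@sinD2pi R)).
Qed.

Lemma expi2piDz (x : R) (n : int) : expi2pi (x + n%:~R) = expi2pi x.
Proof.
case: n => n; first by rewrite -pmulrn expi2piDn.
by rewrite NegzE mulrNz -pmulrn -(expi2piDn _ n.+1) subrK.
Qed.

Lemma expi2pi_int (n : int) : expi2pi (n%:~R : R) = 1.
Proof. by rewrite -[_%:~R]add0r expi2piDz expi2pi0. Qed.

Lemma expi2piN (x : R) : expi2pi (- x) = (expi2pi x)^*.
Proof. by rewrite /expi2pi mulrN cosN sinN. Qed.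

Lemma expi2pi_mulC (x : R) : expi2pi x * (expi2pi x)^* = 1.
Proof.
rewrite /expi2pi /=; congr (_ +i* _); last by ring.
by rewrite mulrN opprK -!expr2 cos2Dsin2.
Qed.

End Expi2pi.

Section Smoothness.
Variable R : realType.

Definition sinusoid (A B al be s : R) : R :=
  A * cos (al * s + be) + B * sin (al * s + be).

Lemma is_derive_sinusoid (A B al be x : R) :
  is_derive x 1 (sinusoid A B al be) (sinusoid (B * al) (- (A * al)) al be x).
Proof.
pose aff (s : R) := al * s + be.
have daff : is_derive x 1 aff al.
  have -> : aff = al *: (@id R) + cst be by apply/funext.
  by apply: is_derive_eq; rewrite addr0 /GRing.scale /= mulr1.
have dcos : is_derive x 1 (cos \o aff) (- sin (aff x) * al) by apply: is_derive1_comp.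
have dsin : is_derive x 1 (sin \o aff) (cos (aff x) * al) by apply: is_derive1_comp.
have -> : sinusoid A B al be = A *: (cos \o aff) + B *: (sin \o aff) by apply/funext.
apply: is_derive_eq.
by rewrite /sinusoid /GRing.scale /=; ring.
Qed.

Lemma derive1n_sinusoid (A B al be : R) n :
  exists A' B', (sinusoid A B al be)^`(n)%classic = sinusoid A' B' al be.
Proof.
elim: n => [|n [A' [B' IH]]]; first by exists A, B; rewrite derive1n0.
exists (B' * al), (- (A' * al)); rewrite derive1nS IH.
by apply/funext => x; rewrite derive1E; case: (is_derive_sinusoid A' B' al be x).
Qed.

Lemma smoothR_sinusoid (A B al be : R) : smoothR (sinusoid A B al be).
Proof.
move=> n x; have [A' [B' ->]] := derive1n_sinusoid A B al be n.
by case: (is_derive_sinusoid A' B' al be x).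
Qed.

Lemma smoothR_cst (c : R) : smoothR (fun _ => c).
Proof.
have -> : (fun _ => c) = sinusoid c 0 0 0.
  by apply/funext => s; rewrite /sinusoid !mul0r !addr0 cos0 mulr1.
exact: smoothR_sinusoid.
Qed.

Definition smoothC (f : R -> R[i]) : Prop :=
  exists gr gi : R -> R, [/\ smoothR gr, smoothR gi & forall s, f s = gr s +i* gi s].

Lemma smoothC_cst (c : R[i]) : smoothC (fun _ => c).
Proof.
exists (fun _ => complex.Re c), (fun _ => complex.Im c).
by split; [exact: smoothR_cst|exact: smoothR_cst|case: c].
Qed.

Lemma smoothC_expi2pi_affine (al be : R) : smoothC (fun s => expi2pi (al * s + be)).
Proof.
exists (sinusoid 1 0 (2 * pi * al) (2 * pi * be)), (sinusoid 0 1 (2 * pi * al) (2 * pi * be)).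
split; try exact: smoothR_sinusoid.
by move=> s; rewrite /expi2pi /sinusoid !mul1r !mul0r addr0 add0r mulrDr mulrA.
Qed.

Lemma pw_smooth_edgewise (m : nat) (X : pt R -> 'M[R[i]]_m) :
  (forall i, (1 <= i <= 6)%N -> exists2 M : R -> 'M[R[i]]_m,
     (forall a b, smoothC (fun s => M s a b)) &
     forall s, 0 <= s <= 1 -> X (lerp (vert R i) (vert R i.+1) s) = M s) ->
  pw_smooth X.
Proof.
move=> Xedge i hi a b; have [M /(_ a b) [gr [gi [gr_sm gi_sm MP]]] XM] := Xedge i hi.
by exists gr, gi; split=> // s hs; rewrite XM.
Qed.

End Smoothness.

Section Frames.
Variables (R : realType) (H : lmodType R[i]).

Lemma antilinear_op_sum (T : H -> H) (I : Type) (s : seq I) (c : I -> R[i]) (v : I -> H) :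
  antilinear_op T -> T (\sum_(i <- s) c i *: v i) = \sum_(i <- s) (c i)^* *: T (v i).
Proof.
move=> Tanti; have TD x y : T (x + y) = T x + T y.
  by rewrite -{1}[x]scale1r Tanti conjC1 scale1r.
have T0 : T 0 = 0 by apply: (addrI (T 0)); rewrite -TD !addr0.
elim: s => [|i s IH]; first by rewrite !big_nil.
by rewrite !big_cons TD -IH -[c i *: v i]addr0 Tanti T0 addr0.
Qed.

Lemma antilinear_comp (T S : H -> H) :
  linear_op T -> antilinear_op S -> antilinear_op (T \o S).
Proof. by move=> Tlin Santi a x y /=; rewrite Santi Tlin. Qed.

Variable m : nat.

Lemma frame_rmul1 (Phi : 'I_m -> H) : frame_rmul Phi 1%:M = Phi.
Proof.
apply/funext => b; rewrite /frame_rmul (bigD1 b) //= big1 ?addr0.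
  by rewrite mxE eqxx scale1r.
by move=> a /negbTE nab; rewrite mxE nab scale0r.
Qed.

Lemma frame_rmul_antilinear (T : H -> H) (Phi : 'I_m -> H) (U : 'M[R[i]]_m) b :
  antilinear_op T -> T (frame_rmul Phi U b) = frame_rmul (T \o Phi) (map_mx conjc U) b.
Proof.
move=> Tanti; rewrite /frame_rmul antilinear_op_sum //.
by apply: eq_bigr => a _; rewrite mxE.
Qed.

End Frames.

Section Geometry.
Variable R : realType.

Lemma lerp_fst (p q : pt R) s : p.1 = q.1 -> (lerp p q s).1 = p.1.
Proof. by rewrite /lerp /= => ->; rewrite subrr mulr0 addr0. Qed.

Lemma lerp_snd (p q : pt R) s : p.2 = q.2 -> (lerp p q s).2 = p.2.
Proof. by rewrite /lerp /= => ->; rewrite subrr mulr0 addr0. Qed.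

Lemma edge16_fst (k : pt R) : edge 1 k \/ edge 6 k -> k.1 = 0.
Proof. by case=> -[s _ ->]; exact: lerp_fst. Qed.

Lemma edge2_snd (k : pt R) : edge 2 k -> k.2 = - 2^-1.
Proof. by case=> s _ ->; exact: lerp_snd. Qed.

Lemma edge5_snd (k : pt R) : edge 5 k -> k.2 = 2^-1.
Proof. by case=> s _ ->; exact: lerp_snd. Qed.

Definition right_edge (k : pt R) : bool := (k.1 == 2^-1) && (- 2^-1 <= k.2 <= 2^-1).

Lemma right_edgeP (k : pt R) : reflect (edge 3 k \/ edge 4 k) (right_edge k).
Proof.
apply: (iffP idP).
  case: k => k1 k2 /andP[/= /eqP -> /andP[k2_ge k2_le]].
  have [k2_le0|k2_gt0] := lerP k2 0.
    left; exists (2 * (k2 + 2^-1)); first by apply/andP; split; lra.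
    by rewrite /lerp /=; congr (_, _); field.
  right; exists (2 * k2); first by apply/andP; split; lra.
  by rewrite /lerp /=; congr (_, _); field.
by case=> -[s /andP[s_ge0 s_le1] ->]; apply/andP; split;
  rewrite ?lerp_fst // /lerp /=; apply/andP; split; lra.
Qed.

Lemma right_edge_reflect (k : pt R) :
  right_edge k -> right_edge (padd (lat_pt R lat_e1) (popp k)).
Proof.
case/andP=> /eqP k1 /andP[k2_ge k2_le]; apply/andP; split.
  by rewrite /= k1; apply/eqP; field.
by rewrite /= add0r; apply/andP; split; lra.
Qed.

Lemma loop_right_edge (t : R) : 2 < t <= 4 -> loop t = (2^-1, (t - 3) / 2).
Proof.
case/andP=> t_gt2 t_le4; have t_gt1 : 1 < t by lra.
rewrite /loop (lt_geF t_gt1) (lt_geF t_gt2).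
by case: ifP => _; rewrite ?t_le4 /lerp /=; congr (_, _); field.
Qed.

Lemma loop_off_right_edge (t : R) : t <= 2 \/ 4 < t ->
  [\/ (loop t).1 = 0, (loop t).2 = - 2^-1 | (loop t).2 = 2^-1].
Proof.
move=> t_off; rewrite /loop.
case: ifP => [_|/negbT]; first by constructor 1; exact: lerp_fst.
rewrite -ltNge => t_gt1; case: ifP => [_|/negbT]; first by constructor 2; exact: lerp_snd.
rewrite -ltNge => t_gt2; have [t_gt3 t_gt4] : 3 < t /\ 4 < t by split; lra.
rewrite (lt_geF t_gt3) (lt_geF t_gt4).
by case: ifP => _; [constructor 3; exact: lerp_snd | constructor 1; exact: lerp_fst].
Qed.

End Geometry.

Lemma diag_mx_unitary (R : realType) (m : nat) (d : 'rV[R[i]]_m) :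
  (forall i, d 0 i * (d 0 i)^* = 1) -> unitary_mx (diag_mx d).
Proof.
move=> d_unit; apply/matrixP => i j; rewrite mul_diag_mx !mxE.
have [<-|nij] := eqVneq i j; first by rewrite !mulr1n d_unit.
by rewrite !mulr0n conjc0 mulr0.
Qed.

Section Gauge.
Variables (R : realType) (m : nat) (r : int).

Definition phase (t : R) : R := - r%:~R * (t + 2^-1).

Definition phase_mx (t : R) : 'M[R[i]]_m :=
  diag_mx (\row_i (if (i : nat) == 0%N then expi2pi (phase t) else 1)).

Definition gauge (k : pt R) : 'M[R[i]]_m :=
  if right_edge k then phase_mx k.2 else 1%:M.

Lemma phase_mxE t a b : phase_mx t a b =
  if a == b then (if (a : nat) == 0%N then expi2pi (phase t) else 1) else 0.
Proof. by rewrite !mxE; case: (a == b); rewrite ?mulr1n ?mulr0n. Qed.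

Lemma phase_mx_unitary t : unitary_mx (phase_mx t).
Proof.
apply: diag_mx_unitary => i; rewrite mxE.
by case: ifP => _; [exact: expi2pi_mulC | rewrite mul1r; exact: conjc1].
Qed.

Lemma phase_mx_corner t : t = - 2^-1 \/ t = 2^-1 -> phase_mx t = 1%:M.
Proof.
have phase_int s : expi2pi (phase s) = 1 -> phase_mx s = 1%:M.
  by move=> e1; apply/matrixP => a b; rewrite phase_mxE e1 if_same mxE; case: (a == b).
case=> ->; apply: phase_int; rewrite /phase; first by rewrite addNr mulr0 expi2pi0.
have -> : - r%:~R * (2^-1 + 2^-1) = (- r)%:~R :> R by rewrite intrN; field.
exact: expi2pi_int.
Qed.

Lemma det_phase_mx t : (0 < m)%N -> \det (phase_mx t) = expi2pi (phase t).
Proof.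
move=> m_gt0; rewrite det_diag (bigD1 (Ordinal m_gt0)) //= big1 ?mulr1.
  by rewrite mxE eqxx.
by move=> i i_neq0; rewrite mxE ifF //; apply: contraNF i_neq0 => /eqP i0; apply/eqP/val_inj.
Qed.

Lemma phase_mxN t : phase_mx (- t) = map_mx conjc (phase_mx t).
Proof.
apply/matrixP => a b; rewrite phase_mxE mxE phase_mxE.
case: ifP => _; last exact/esym/conjc0.
case: ifP => _; last exact/esym/conjc1.
have -> : phase (- t) = - phase t + (- r)%:~R by rewrite /phase intrN; field.
by rewrite expi2piDz expi2piN.
Qed.

Lemma smoothC_phase_mx (p q : pt R) a b :
  smoothC (fun s => phase_mx (lerp p q s).2 a b).
Proof.
under eq_fun => s do rewrite phase_mxE.
case: (a == b); last exact: smoothC_cst.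
case: (_ == _); last exact: smoothC_cst.
have [gr [gi [gr_sm gi_sm gP]]] :=
  smoothC_expi2pi_affine (- r%:~R * (q.2 - p.2)) (- r%:~R * (p.2 + 2^-1)).
by exists gr, gi; split=> // s; rewrite -gP /phase /lerp /=; congr expi2pi; ring.
Qed.

Lemma gauge_unitary k : unitary_mx (gauge k).
Proof.
rewrite /gauge; case: ifP => _; first exact: phase_mx_unitary.
by rewrite -(phase_mx_corner (or_intror erefl)); exact: phase_mx_unitary.
Qed.

Lemma gauge_eq1 k : [\/ k.1 = 0, k.2 = - 2^-1 | k.2 = 2^-1] -> gauge k = 1%:M.
Proof.
rewrite /gauge; case: ifP => // /andP[/eqP k1 _] [k10|k2|k2].
- by move: k1; rewrite k10 => /eqP; rewrite eq_sym invr_eq0 pnatr_eq0.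
- by rewrite phase_mx_corner //; left.
- by rewrite phase_mx_corner //; right.
Qed.

Lemma gauge_off_edge34 k : ~ (edge 3 k \/ edge 4 k) -> gauge k = 1%:M.
Proof. by move=> k_off; rewrite /gauge; case: right_edgeP. Qed.

Lemma gauge_reflect k : right_edge k ->
  gauge (padd (lat_pt R lat_e1) (popp k)) = map_mx conjc (gauge k).
Proof.
move=> k_right; rewrite /gauge k_right right_edge_reflect //= add0r.
exact: phase_mxN.
Qed.

(* [(|t - 2| - |t - 4| + 2) / 4] is [(t - 2) / 2] clamped to [[0, 1]]. *)
Definition lift (t : R) : R := - r%:~R * ((`|t - 2| - `|t - 4| + 2) / 4).

Lemma continuous_lift : continuous lift.
Proof.
move=> t; apply: cvgM; first exact: cvg_cst.
apply: cvgM; last exact: cvg_cst.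
apply: cvgD; last exact: cvg_cst.
by apply: cvgB; apply: cvg_norm; apply: cvgB; first [exact: cvg_id | exact: cvg_cst].
Qed.

Lemma lift_le2 t : t <= 2 -> lift t = 0.
Proof. by move=> t_le2; rewrite /lift !ler0_norm; lra. Qed.

Lemma lift_ge4 t : 4 <= t -> lift t = (- r)%:~R.
Proof. by move=> t_ge4; rewrite /lift !ger0_norm ?intrN; try lra; field. Qed.

Lemma lift_mid t : 2 <= t <= 4 -> lift t = phase ((t - 3) / 2).
Proof.
by case/andP=> t_ge2 t_le4; rewrite /lift /phase ger0_norm ?ler0_norm; try lra; field.
Qed.

Lemma det_gauge_loop t : (0 < m)%N -> \det (gauge (loop t)) = expi2pi (lift t).
Proof.
move=> m_gt0; have [t_le2|t_gt2] := lerP t 2.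
  by rewrite gauge_eq1 ?det1 ?lift_le2 ?expi2pi0 //; apply: loop_off_right_edge; left.
have [t_le4|t_gt4] := lerP t 4.
  rewrite /gauge loop_right_edge ?t_gt2 // /right_edge eqxx /= ifT; last first.
    by apply/andP; split; lra.
  by rewrite det_phase_mx // lift_mid // (ltW t_gt2).
by rewrite gauge_eq1 ?det1 ?lift_ge4 ?expi2pi_int ?ltW //; apply: loop_off_right_edge; right.
Qed.

Lemma winding_det_gauge : (0 < m)%N ->
  winding (fun t : R => \det (gauge (loop t))) 0 6 (- r).
Proof.
move=> m_gt0; exists lift; split.
- exact/continuous_subspaceT/continuous_lift.
- by move=> t _; exact: det_gauge_loop.
- by rewrite lift_ge4 ?lift_le2 ?subr0 //; lra.
Qed.

Lemma pw_smooth_gauge : pw_smooth gauge.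
Proof.
apply: pw_smooth_edgewise => i /andP[i_ge1 i_le6].
have [i34|i_off] := boolP ((i == 3) || (i == 4))%N.
  exists (fun s => phase_mx (lerp (vert R i) (vert R i.+1) s).2).
    by move=> a b; exact: smoothC_phase_mx.
  move=> s s01; rewrite /gauge ifT //; apply/right_edgeP.
  by case/orP: i34 => /eqP ->; [left | right]; exists s.
exists (fun _ => 1%:M); first by move=> a b; exact: smoothC_cst.
move=> s _; apply: gauge_eq1.
case: i i_ge1 i_le6 i_off => [|[|[|[|[|[|[|i]]]]]]] // _ _ _.
- by constructor 1; exact: lerp_fst.
- by constructor 2; exact: lerp_snd.
- by constructor 3; exact: lerp_snd.
- by constructor 1; exact: lerp_fst.
Qed.

Lemma edge_sym_gauge (H : lmodType R[i]) (Theta : H -> H) (tau : latt -> H -> H)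
    (Phi : pt R -> 'I_m -> H) :
  linear_op (tau lat_e1) -> antilinear_op Theta -> edge_sym Theta tau Phi ->
  edge_sym Theta tau (fun k => frame_rmul (Phi k) (gauge k)).
Proof.
move=> tau_lin Theta_anti [sym16 sym2 sym34 sym5]; split=> k k_edge a /=.
- have k1 := edge16_fst k_edge.
  rewrite !gauge_eq1 ?frame_rmul1; [exact: sym16 | by constructor 1 | ].
  by constructor 1; rewrite /= k1 oppr0.
- have k2 := edge2_snd k_edge.
  rewrite !gauge_eq1 ?frame_rmul1; [exact: sym2 | by constructor 2 | ].
  by constructor 3; rewrite /= k2; field.
- have k_right : right_edge k by apply/right_edgeP.
  rewrite gauge_reflect // (funext (sym34 k k_edge)) -[RHS]/((tau lat_e1 \o Theta) _).
  by rewrite frame_rmul_antilinear //; exact: antilinear_comp.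
- have k2 := edge5_snd k_edge.
  rewrite !gauge_eq1 ?frame_rmul1; [exact: sym5 | by constructor 3 | ].
  by constructor 2; rewrite /= k2; field.
Qed.

End Gauge.

Theorem mainTheorem5 (R : realType) (H : lmodType R[i]) (ip : H -> H -> R[i])
  (m : nat) (P : pt R -> H -> H) (tau : latt -> H -> H) (Theta : H -> H) (r : int) :
  inner_product ip -> complete_ip ip -> separable_ip ip ->
  (0 < m)%N ->
  (forall k, orth_proj ip (P k)) ->
  (forall k, rank_eq (P k) m) ->
  (* (P2) *)
  unitary_rep ip tau ->
  (forall k l v, P (padd k (lat_pt R l)) v = tau l (P k (tau (lat_opp l) v))) ->
  (* (P3) *)
  antiunitary_op ip Theta ->
  (forall v, Theta (Theta v) = v) ->
  (forall k v, P (popp k) v = Theta (P k (Theta v))) ->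
  (* (P4) *)
  (forall l v, Theta (tau l v) = tau (lat_opp l) (Theta v)) ->
  exists X : pt R -> 'M[R[i]]_m,
    [/\ (forall k, bdry k -> unitary_mx (X k)),
        pw_smooth X,
        (* (i) *)
        winding (fun t => \det (X (loop t))) 0 6 (- r),
        (* (ii) *)
        (forall Phi : pt R -> 'I_m -> H,
           (forall k, bdry k -> onb_range ip (P k) (Phi k)) ->
           edge_sym Theta tau Phi ->
           edge_sym Theta tau (fun k => frame_rmul (Phi k) (X k))) &
        (* (iii) *)
        (forall k, bdry k -> ~ (edge 3 k \/ edge 4 k) -> X k = 1%:M)].
Proof.
move=> _ _ _ m_gt0 _ _ [tau_unitary _ _] _.
case=> Theta_antilinear _ _ _ _ _.
have [tau_e1_linear _ _] := tau_unitary lat_e1.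
exists (gauge m r); split.
- by move=> k _; exact: gauge_unitary.
- exact: pw_smooth_gauge.
- exact: winding_det_gauge.
- by move=> Phi _; exact: edge_sym_gauge.
- by move=> k _; exact: gauge_off_edge34.
Qed.
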